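(* There exists an absolute constant $c>0$ such that the following holds. Let $n\in\mathbb{N}$, let $0\le\alpha\le1$, and let $S\subseteq\mathbb{F}_2^n$ with $|S|\ge\alpha 2^n$. Then $\rho(S)\ge c\,\alpha^{1/2}n^{1/2}$.
   Context: For $x,y\in\mathbb{F}_2^n$, the Hamming distance is $d_H(x,y)=\#\{i:x_i\neq y_i\}$. A set $R\subseteq\mathbb{F}_2^n$ is called rainbow if the $\binom{|R|}{2}$ Hamming distances $d_H(x,y)$ over unordered pairs of distinct points $x,y\in R$ are pairwise distinct. $\rho(S)$ denotes the maximum size of a rainbow subset $R\subseteq S$. *)

From mathcomp Require Import all_boot.
From Stdlib Require Import Reals.
Set Implicit Arguments. Unset Strict Implicit. Unset Printing Implicit Defensive.

Definition F2n (n : nat) := {ffun 'I_n -> bool}.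

Definition dH (n : nat) (x y : F2n n) : nat := #|[set i : 'I_n | x i != y i]|.

(* R is rainbow: distinct unordered pairs of distinct points have distinct
   distances.  Unordered pairs {x,y} and {u,v} are compared as sets. *)
Definition rainbow (n : nat) (R : {set F2n n}) : bool :=
  [forall x in R, forall y in R, forall u in R, forall v in R,
    ((x != y) && (u != v) && (dH x y == dH u v)) ==>
    ([set x; y] == [set u; v])].

Definition rho (n : nat) (S : {set F2n n}) : nat :=
  \max_(R : {set F2n n} | (R \subset S) && rainbow R) #|R|.

(* Cut the coordinates of F_2^n into blocks of sizes 1, 2, ..., 2^(k-1), where
   2^k <= n + 1, and send b in F_2^k to the word equal to b_i on block i.  The
   distance between two images is the binary number sum_i 2^i [b_i <> b'_i],
   which determines b + b'.  Hence a Sidon set of F_2^k (sums of pairs of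
   distinct points are distinct) is mapped, as are all its translates, onto a
   rainbow set.  Averaging over translates, S pulls back to a set B of F_2^k of
   density at least alpha.  Finally every B contains a Sidon subset of size
   about |B|^(1/2): send B into F x F, F = GF(2^r) with 4^r ~ |B|, by a random
   linear map and shift, and keep the points landing alone on the Sidon set
   {(x, x^3)}; on average about 2^r |B| / 4^r of them survive. *)

From HB Require Import structures.
From mathcomp Require Import all_boot all_algebra all_field zify ring.
Set Implicit Arguments. Unset Strict Implicit.
Import GRing.Theory.

Lemma exists_ge_average (I : finType) (i0 : I) (g : I -> nat) :
  exists i, \sum_j g j <= #|I| * g i.
Proof.
have I_gt0 : 0 < #|I| by apply/card_gt0P; exists i0.
have [i max_i] := eq_bigmax g I_gt0.
by exists i; rewrite -max_i -sum_nat_const; apply: leq_sum => j _; apply: leq_bigmax.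
Qed.

Lemma sum_trunc_log2 K (f : nat -> nat) :
  \sum_(0 <= j < 2 ^ K - 1) f (trunc_log 2 j.+1) = \sum_(i < K) 2 ^ i * f i.
Proof.
elim: K => [|K IH]; first by rewrite big_geq // big_ord0.
have pos := expn_gt0 2 K; rewrite expnS.
rewrite (@big_cat_nat _ _ _ (2 ^ K - 1)) ?leq0n //=; last by lia.
rewrite IH big_ord_recr /=; congr (_ + _).
rewrite (@eq_big_nat _ _ _ _ _ _ (fun=> f K)) ?sum_nat_const_nat; first by congr (_ * _); lia.
by move=> j /andP[j_ge j_lt]; rewrite (@trunc_log_eq 2 K) // expnS; lia.
Qed.

Lemma bin_sum_lt K (c : nat -> bool) : \sum_(i < K) 2 ^ i * c i < 2 ^ K.
Proof.
elim: K => [|K IH]; first by rewrite big_ord0.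
move: IH; rewrite big_ord_recr /= expnS; set s := \sum_(i < K) _.
by case: (c K) => /=; lia.
Qed.

Lemma bin_sum_inj K (c c' : nat -> bool) :
  \sum_(i < K) 2 ^ i * c i = \sum_(i < K) 2 ^ i * c' i ->
  forall i, i < K -> c i = c' i.
Proof.
elim: K => [|K IH] // + i; rewrite !big_ord_recr /=.
move: (bin_sum_lt K c) (bin_sum_lt K c') (IH^~ i).
set s := \sum_(i < K) _; set s' := \sum_(i < K) _ => lt_s lt_s' IHi e.
have cK : c K = c' K by move: e; case: (c K); case: (c' K) => //=; lia.
rewrite cK in e; move/addIn: e => /IHi {}IHi.
by rewrite ltnS leq_eqVlt => /orP[/eqP -> | /IHi].
Qed.

(* The coordinates of F_2^n are cut into consecutive blocks of sizes
   1, 2, 4, ...: coordinate j lies in block [trunc_log 2 j.+1], and block i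
   carries the i-th coordinate of b (or 0 when i >= k). *)
Definition block_embed n k (b : F2n k) : F2n n :=
  [ffun j : 'I_n => nth false (fgraph b) (trunc_log 2 j.+1)].

Lemma dH_block_embed n k (b b' : F2n k) : 2 ^ k - 1 <= n ->
  dH (block_embed n b) (block_embed n b') = \sum_(i < k) 2 ^ i * (b + b')%R i.
Proof.
move=> kn; pose g i := nth false (fgraph b) i != nth false (fgraph b') i.
rewrite /dH -sum1_card big_mkcond /=.
rewrite (eq_bigr (fun j : 'I_n => nat_of_bool (g (trunc_log 2 j.+1)))); last first.
  by move=> j _; rewrite inE !ffunE /g; case: (_ != _).
rewrite -(big_mkord xpredT (fun j => nat_of_bool (g (trunc_log 2 j.+1)))).
rewrite (@big_cat_nat _ _ _ (2 ^ k - 1)) //= (sum_trunc_log2 k (fun i => nat_of_bool (g i))).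
rewrite [X in _ + X]big1_seq ?addn0 => [|j /andP[_]].
  by apply: eq_bigr => i _; rewrite /g !nth_fgraph_ord ffunE; case: (b i); case: (b' i).
rewrite mem_index_iota => /andP[j_ge _].
have k_le : k <= trunc_log 2 j.+1 by apply: trunc_log_max => //; have := expn_gt0 2 k; lia.
by rewrite /g !nth_default ?size_tuple ?card_ord.
Qed.

Lemma block_embed_dH_eq n k (b1 b2 b3 b4 : F2n k) : 2 ^ k - 1 <= n ->
  dH (block_embed n b1) (block_embed n b2) = dH (block_embed n b3) (block_embed n b4) ->
  (b1 + b2 = b3 + b4)%R.
Proof.
move=> kn; rewrite !dH_block_embed // => e; apply/ffunP => i.
have bin (d : F2n k) : \sum_(i < k) 2 ^ i * d i = \sum_(i < k) 2 ^ i * nth false (fgraph d) i.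
  by apply: eq_bigr => j _; rewrite nth_fgraph_ord.
move: e; rewrite !bin => /bin_sum_inj /(_ i (ltn_ord i)).
by rewrite !nth_fgraph_ord.
Qed.

Lemma block_embed_inj n k : 2 ^ k - 1 <= n -> injective (@block_embed n k).
Proof.
move=> kn b b' e; apply: (@addrI _ b); symmetry.
by apply: (block_embed_dH_eq kn); rewrite e.
Qed.

Lemma dH_addr n (x y t : F2n n) : dH (x + t)%R (y + t)%R = dH x y.
Proof.
by apply: eq_card => j; rewrite !inE !ffunE; case: (x j); case: (y j); case: (t j).
Qed.

Lemma card_F2n n : #|{: F2n n}| = 2 ^ n.
Proof. by rewrite card_ffun card_bool card_ord. Qed.

Lemma exists_translate_dense n (X : finType) (f : X -> F2n n) (S : {set F2n n}) :
  exists t, #|X| * #|S| <= 2 ^ n * #|[set x | (f x + t)%R \in S]|.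
Proof.
have [t avg_t] := @exists_ge_average (F2n n) 0%R (fun t => #|[set x | (f x + t)%R \in S]|).
exists t; rewrite -card_F2n; apply: leq_trans avg_t.
apply: eq_leq; rewrite -sum_nat_const.
under [RHS]eq_bigr do rewrite -sum1_card big_mkcond /=.
rewrite exchange_big; apply: eq_bigr => x _.
rewrite -(card_preimset S (addrI (f x))) -sum1_card big_mkcond.
by apply: eq_bigr => t' _; rewrite !inE.
Qed.

(* Only pairs of distinct points are constrained: in characteristic 2 every
   [x + x] vanishes. *)
Definition sidon (V : zmodType) (A : {pred V}) : Prop :=
  forall x y z w, x \in A -> y \in A -> z \in A -> w \in A ->
  x != y -> (x + y = z + w)%R -> (z = x /\ w = y) \/ (z = y /\ w = x).

Lemma rainbow_block_embed n k (T : {set F2n k}) (t : F2n n) :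
  2 ^ k - 1 <= n -> sidon T -> rainbow [set (block_embed n b + t)%R | b in T].
Proof.
move=> kn sidonT.
apply/forall_inP => _ /imsetP[b1 T1 ->]; apply/forall_inP => _ /imsetP[b2 T2 ->].
apply/forall_inP => _ /imsetP[b3 T3 ->]; apply/forall_inP => _ /imsetP[b4 T4 ->].
apply/implyP => /andP[/andP[neq12 _] /eqP]; rewrite !dH_addr => /(block_embed_dH_eq kn) e.
have {}neq12 : b1 != b2 by apply: contraNneq neq12 => ->.
by case: (sidonT _ _ _ _ T1 T2 T3 T4 neq12 e) => -[-> ->]; rewrite // setUC.
Qed.

Definition cube_graph (F : ringType) : {pred F * F} := [pred v | v.2 == v.1 ^+ 3]%R.
Arguments cube_graph : clear implicits.

Section CubeGraph.
Local Open Scope ring_scope.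
Variable F : fieldType.
Hypothesis F_char2 : 2 \in [pchar F].

Lemma char2_sum_cubes (x y : F) :
  x ^+ 3 + y ^+ 3 = (x + y) ^+ 3 + (x + y) * (x * y).
Proof.
have -> : (x + y) ^+ 3 = x ^+ 3 + y ^+ 3 + (x + y) * (x * y) + 2%:R * ((x + y) * (x * y)).
  by ring.
by rewrite (pcharf0 F_char2) mul0r addr0 -addrA addrr_pchar2 ?addr0.
Qed.

Lemma sidon_cube_graph : sidon (cube_graph F).
Proof.
move=> [x1 y1] [x2 y2] [x3 y3] [x4 y4]; rewrite !inE /= => /eqP-> /eqP-> /eqP-> /eqP->.
move=> neq12 [sum_eq cube_eq].
have {}neq12 : x1 != x2 by apply: contraNneq neq12 => ->.
have s_neq0 : x1 + x2 != 0 by rewrite addr_eq0 oppr_pchar2.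
have prod_eq : x1 * x2 = x3 * x4.
  apply: (mulfI s_neq0); apply: (@addrI _ ((x1 + x2) ^+ 3)).
  by rewrite -char2_sum_cubes cube_eq char2_sum_cubes sum_eq.
have : (x3 - x1) * (x3 - x2) = 0.
  have -> : (x3 - x1) * (x3 - x2) = x3 ^+ 2 - (x1 + x2) * x3 + x1 * x2 by ring.
  by rewrite sum_eq prod_eq; ring.
move/eqP; rewrite mulf_eq0 !subr_eq0 => /orP[] /eqP x3E; rewrite x3E in sum_eq *.
  by left; rewrite (addrI _ sum_eq).
by right; rewrite addrC in sum_eq; rewrite (addrI _ sum_eq).
Qed.

End CubeGraph.

Lemma card_cube_graph (F : finRingType) : #|cube_graph F| = #|F|.
Proof.
rewrite -(card_image (f := fun x : F => (x, x ^+ 3)%R)) => [|x y [] //].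
apply: eq_card => -[x y]; rewrite inE /=.
by apply/eqP/imageP => [->|[x' _ [-> ->]]]; first exists x.
Qed.

Lemma card_translate_pred (V : finZmodType) (P : {pred V}) (v : V) :
  #|[set u | (v + u)%R \in P]| = #|P|.
Proof. exact: on_card_preimset (onW_bij _ (Bijective (addKr v) (addNKr v))). Qed.

Section SidonTransfer.
Local Open Scope ring_scope.
Variables (V : finZmodType) (k : nat).
Hypothesis addvv : forall v : V, v + v = 0.
Variables (P : {pred V}) (B : {set F2n k}).

Implicit Types (a : {ffun 'I_k -> V}) (b : F2n k) (u : V).

Definition lin a b : V := \sum_(i | b i) a i.

Lemma linDr a : {morph lin a : b b' / b + b'}.
Proof.
move=> b b'; rewrite /lin big_mkcond [X in _ = X + _]big_mkcond [X in _ = _ + X]big_mkcond.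
rewrite -big_split; apply: eq_bigr => i _.
by rewrite ffunE; case: (b i); case: (b' i); rewrite /= ?addr0 ?add0r ?addvv.
Qed.

Lemma linDl b : {morph lin^~ b : a a' / a + a'}.
Proof. by move=> a a'; rewrite /lin -big_split; apply: eq_bigr => i _; rewrite ffunE. Qed.

Lemma oppvv (v : V) : - v = v.
Proof. by apply/eqP; rewrite eq_sym -addr_eq0 addvv. Qed.

Lemma card_lin_eq b b' : b != b' ->
  (#|V| * #|[set a | lin a b == lin a b']| = #|{ffun 'I_k -> V}|)%N.
Proof.
move=> neq_bb'; set d := b + b'.
have [i0 d_i0] : exists i0, d i0.
  apply/existsP; apply: contraNT neq_bb' => /existsPn d0; apply/eqP/ffunP => i.
  by move: (d0 i); rewrite ffunE; case: (b i); case: (b' i).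
pose e v : {ffun 'I_k -> V} := [ffun i => if i == i0 then v else 0].
have lin_e v : lin (e v) d = v.
  rewrite /lin (bigD1 i0) //= big1 ?ffunE ?eqxx ?addr0 // => i /andP[_ /negbTE neq_i].
  by rewrite ffunE neq_i.
have fibre v : #|[set a | lin a d == v]| = #|[set a | lin a d == 0]|.
  rewrite -[RHS](card_preimset _ (addIr (e v))); apply: eq_card => a.
  by rewrite !inE linDl lin_e addr_eq0 oppvv.
have -> : [set a | lin a b == lin a b'] = [set a | lin a d == 0].
  by apply/setP => a; rewrite !inE linDr addr_eq0 oppvv.
rewrite -sum_nat_const -[RHS]sum1_card (partition_big (lin^~ d) xpredT) //=.
by apply: eq_bigr => v _; rewrite -(fibre v) -sum1_card; apply: eq_bigl => a; rewrite inE.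
Qed.

Definition alone a b := [forall b' in B, (lin a b' == lin a b) ==> (b' == b)].
Definition hits a u := [set b in B | lin a b + u \in P].
Definition kept a u := [set b in hits a u | alone a b].
Definition collisions a b := #|[set b' in B | (b' != b) && (lin a b' == lin a b)]|.

Lemma aloneP a b b' : alone a b -> b' \in B -> lin a b' = lin a b -> b' = b.
Proof. by move=> /forall_inP/[apply] /implyP + e; rewrite e eqxx => /(_ isT)/eqP. Qed.

Lemma kept_sub a u : kept a u \subset B.
Proof. by apply/subsetP => b; rewrite !inE => /andP[/andP[]]. Qed.

Lemma sidon_kept a u : sidon P -> sidon (kept a u).
Proof.
move=> P_sidon.
have keptP b : b \in kept a u -> [/\ b \in B, lin a b + u \in P & alone a b].
  by rewrite !inE => /andP[/andP[]].
move=> b1 b2 b3 b4 /keptP[B1 P1 A1] /keptP[B2 P2 A2] /keptP[B3 P3 _] /keptP[B4 P4 _].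
move=> neq12 e12; have neq12' : lin a b1 + u != lin a b2 + u.
  by apply: contra neq12 => /eqP/addIr/(aloneP A2 B1)->.
have e : (lin a b1 + u) + (lin a b2 + u) = (lin a b3 + u) + (lin a b4 + u).
  by rewrite 2!(addrACA _ u) addvv !addr0 -!linDr e12.
case: (P_sidon _ _ _ _ P1 P2 P3 P4 neq12' e) => -[/addIr e3 /addIr e4].
  by left; split; [apply: aloneP A1 B3 e3 | apply: aloneP A2 B4 e4].
by right; split; [apply: aloneP A2 B3 e3 | apply: aloneP A1 B4 e4].
Qed.

Lemma card_hits_le a u :
  (#|hits a u| <= #|kept a u| + \sum_(b in hits a u) collisions a b)%N.
Proof.
have -> : #|kept a u| = (\sum_(b in hits a u) alone a b)%N.
  rewrite -sum1_card (eq_bigl (fun b => (b \in hits a u) && alone a b)) => [|b].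
    by rewrite big_mkcondr; apply: eq_bigr => b _; case: (alone a b).
  by rewrite [b \in kept a u]inE.
rewrite -sum1_card -big_split /=; apply: leq_sum => b /[!inE] /andP[Bb _].
case: (boolP (alone a b)) => //= /forall_inPn[b' Bb'].
rewrite negb_imply => /andP[e neq]; apply/card_gt0P.
by exists b'; rewrite !inE Bb' neq e.
Qed.

Lemma sum_over_hits a (F : F2n k -> nat) :
  (\sum_u \sum_(b in hits a u) F b = #|P| * \sum_(b in B) F b)%N.
Proof.
under eq_bigr do rewrite big_mkcond /=.
rewrite exchange_big big_distrr [RHS]big_mkcond /=; apply: eq_bigr => b _.
case: (boolP (b \in B)) => Bb; last by rewrite big1 // => u _; rewrite inE (negbTE Bb).
rewrite -(card_translate_pred P (lin a b)) -sum1_card big_distrl [RHS]big_mkcond /=.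
by apply: eq_bigr => u _; rewrite !inE Bb; case: (_ \in P); rewrite ?mul1n.
Qed.

Lemma sum_collisions :
  (#|V| * \sum_a \sum_(b in B) collisions a b <= #|B| * #|B| * #|{ffun 'I_k -> V}|)%N.
Proof.
rewrite exchange_big big_distrr -mulnA -sum_nat_const /=; apply: leq_sum => b _.
have coll a : collisions a b = (\sum_(b' in B | b' != b) (lin a b' == lin a b))%N.
  rewrite /collisions -sum1_card.
  rewrite (eq_bigl (fun b' => (b' \in B) && (b' != b) && (lin a b' == lin a b))).
    by rewrite big_mkcondr; apply: eq_bigr => b' _; case: (_ == _).
  by move=> b'; rewrite inE andbA.
under eq_bigr do rewrite coll.
rewrite exchange_big big_distrr -sum_nat_const /= big_mkcondr; apply: leq_sum => b' _.
case: ifP => // neq; rewrite -(card_lin_eq neq); apply: eq_leq; congr (_ * _)%N.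
by rewrite -sum1_card [RHS]big_mkcond; apply: eq_bigr => a _; rewrite inE; case: (_ == _).
Qed.

Lemma sum_card_kept : (2 * #|B| <= #|V|)%N ->
  (#|{ffun 'I_k -> V}| * (#|B| * #|P|) <= 2 * \sum_a \sum_u #|kept a u|)%N.
Proof.
move=> B_small; have V_gt0 : (0 < #|V|)%N by apply/card_gt0P; exists 0.
set K := (\sum_a _)%N; set C := (\sum_a \sum_(b in B) collisions a b)%N.
have hits_le : (#|{ffun 'I_k -> V}| * (#|B| * #|P|) <= K + #|P| * C)%N.
  apply: (@leq_trans (\sum_(a : {ffun 'I_k -> V}) (#|B| * #|P|))%N).
    by rewrite sum_nat_const.
  rewrite /K /C big_distrr -big_split /=; apply: leq_sum => a _.
  have := sum_over_hits a (fun=> 1%N); rewrite sum1_card mulnC => <-.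
  rewrite -(sum_over_hits a (collisions a)) -big_split; apply: leq_sum => u _.
  by rewrite sum1_card; apply: card_hits_le.
have : (#|V| * (2 * (#|P| * C)) <= #|V| * (#|{ffun 'I_k -> V}| * (#|B| * #|P|)))%N.
  have := leq_mul (leqnn (2 * #|P|)) sum_collisions.
  have := leq_mul (leqnn (#|P| * #|B| * #|{ffun 'I_k -> V}|)) B_small.
  by lia.
by rewrite leq_pmul2l //; lia.
Qed.

Lemma exists_large_kept : (2 * #|B| <= #|V|)%N ->
  exists a u, (#|P| * #|B| <= 2 * #|V| * #|kept a u|)%N.
Proof.
move=> B_small; have A_gt0 : (0 < #|{ffun 'I_k -> V}|)%N by apply/card_gt0P; exists 0.
have [[a u] avg] := @exists_ge_average ({ffun 'I_k -> V} * V)%type (0, 0)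
  (fun au => #|kept au.1 au.2|).
exists a, u; rewrite -(leq_pmul2l A_gt0).
move: avg (sum_card_kept B_small).
rewrite -(pair_big xpredT xpredT (fun a u => #|kept a u|)) card_prod /=.
by lia.
Qed.

End SidonTransfer.

(* finalg does not equip pairs with their finite zmodule structure. *)
HB.instance Definition _ (U W : finZmodType) := GRing.Zmodule.on (U * W)%type.

Lemma exists_large_sidon_subset k (B : {set F2n k}) :
  exists T : {set F2n k}, [/\ T \subset B, sidon T & #|B| <= 32 * #|T| ^ 2].
Proof.
have [B0 | B_gt0] := posnP #|B|.
  by exists set0; split; rewrite ?sub0set ?B0 // => x y z w; rewrite inE.
(* |F * F| = 4 ^ r lies in [2 |B|, 8 |B|), so the kept set has at least
   |B| / (2 * 2 ^ r) >= (|B| / 32) ^ (1/2) points. *)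
pose r := up_log 4 (2 * #|B|).
have r_gt0 : 0 < r by rewrite up_log_gt0; lia.
have V_large : 2 * #|B| <= 4 ^ r by apply: up_logP.
have V_small : 4 ^ r < 8 * #|B|.
  have := @up_log_gtn 4 (2 * #|B|) isT ltac:(lia); rewrite -/r.
  by rewrite -[in 4 ^ r](prednK r_gt0) expnS; lia.
have [F F_char2 card_F] := pPrimePowerField (isT : prime 2) r_gt0.
have card_V : #|{: F * F}| = 4 ^ r by rewrite card_prod card_F -expnMn.
have addvv (v : F * F) : (v + v = 0)%R.
  case: v => x y; rewrite (_ : (x, y) + (x, y) = (x + x, y + y))%R //.
  by rewrite !(addrr_pchar2 F_char2).
have B_small : 2 * #|B| <= #|{: F * F}| by rewrite card_V.
have [a [u large]] := exists_large_kept addvv (cube_graph F) B_small.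
exists (kept (cube_graph F) B a u); split; first exact: kept_sub.
  exact: (@sidon_kept _ _ addvv (cube_graph F) B a u (sidon_cube_graph F_char2)).
have e4 : 4 ^ r = 2 ^ r * 2 ^ r by rewrite -expnMn.
move: large; rewrite card_cube_graph card_F card_V e4; set t := #|kept _ _ _ _| => large.
have B_le : #|B| <= 2 * 2 ^ r * t.
  by rewrite -(leq_pmul2l (expn_gt0 2 r)); apply: leq_trans large _; lia.
rewrite -(leq_pmul2l B_gt0).
have := leq_mul B_le B_le; have := leq_mul (ltnW V_small) (leqnn (4 * t ^ 2)).
by lia.
Qed.

Lemma rho_lower_bound n k (S : {set F2n n}) :
  2 ^ k - 1 <= n -> 2 ^ k * #|S| <= 32 * 2 ^ n * rho S ^ 2.
Proof.
move=> kn; have [t dense] := exists_translate_dense (@block_embed n k) S.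
rewrite card_F2n in dense.
pose B := [set b : F2n k | (block_embed n b + t)%R \in S].
have [T [T_sub T_sidon B_le]] := exists_large_sidon_subset B.
have T_le : #|T| <= rho S.
  have inj : injective (fun b : F2n k => block_embed n b + t)%R.
    by move=> b b' /addIr; apply: block_embed_inj.
  rewrite -(card_imset T inj); apply: leq_bigmax_cond.
  rewrite rainbow_block_embed // andbT.
  by apply/subsetP => _ /imsetP[b /(subsetP T_sub) + ->]; rewrite inE.
apply: (leq_trans dense); rewrite (mulnC 32) -mulnA leq_pmul2l ?expn_gt0 //.
by apply: (leq_trans B_le); rewrite leq_mul2l leq_sqr T_le orbT.
Qed.

Lemma rho_sq_lower_bound n (S : {set F2n n}) : n.+1 * #|S| <= 64 * 2 ^ n * rho S ^ 2.
Proof.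
pose k := trunc_log 2 n.+1.
have n_lt : n.+1 < 2 * 2 ^ k by rewrite -expnS trunc_log_ltn.
have kn : 2 ^ k - 1 <= n by have := @trunc_logP 2 n.+1 isT isT; rewrite -/k; lia.
have := rho_lower_bound S kn; have := leq_mul (ltnW n_lt) (leqnn #|S|).
by lia.
Qed.

(* Imported only now: Reals rebinds [^] in nat_scope to [Nat.pow]. *)
From Stdlib Require Import Reals Lra.
Open Scope R_scope.

Lemma INR_expn m e : INR (expn m e) = INR m ^ e.
Proof. by elim: e => //= e IH; rewrite expnS -multE mult_INR IH. Qed.

Theorem theorem1p6 :
  exists c : R, 0 < c /\
  forall (n : nat) (alpha : R) (S : {set F2n n}),
    0 <= alpha <= 1 ->
    INR #|S| >= alpha * 2 ^ n ->
    INR (rho S) >= c * sqrt alpha * sqrt (INR n).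
Proof.
exists (1 / 8); split; first lra.
move=> n alpha S [alpha_ge0 _] S_large.
have := le_INR _ _ (leP (rho_sq_lower_bound S)).
have INR2 : INR 2 = 2 by rewrite INR_IZR_INZ.
have INR64 : INR 64 = 64 by rewrite INR_IZR_INZ.
rewrite -!multE !mult_INR !INR_expn S_INR INR2 INR64 => bound.
have rho_ge0 := pos_INR (rho S); have n_ge0 := pos_INR n.
have key : alpha * INR n <= 64 * INR (rho S) ^ 2.
  have pos : 0 < 2 ^ n by apply: pow_lt; lra.
  apply: (Rmult_le_reg_l (2 ^ n)) => //.
  have : (INR n + 1) * (alpha * 2 ^ n) <= (INR n + 1) * INR #|S|.
    by apply: Rmult_le_compat_l; lra.
  have : 0 <= alpha * 2 ^ n by apply: Rmult_le_pos; lra.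
  by nra.
rewrite Rmult_assoc -sqrt_mult //; apply: Rle_ge.
have := sqrt_le_1_alt _ _ key.
rewrite (_ : 64 * INR (rho S) ^ 2 = (8 * INR (rho S)) ^ 2); last by ring.
by rewrite sqrt_pow2; lra.
Qed.
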